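(* Let $g$ and $k$ be positive integers, and let $A \in \mathcal A_k$. Then the number of numerical semigroups with genus $g$ and type $(A; k)$ is at most $F_{g - |(A + A)\cap[0, k]| + |A| - k - 1}$, with equality if $3k \leq g + |A| + |(A + A)\cap[0, k]| - 2$; in particular equality holds if $3k \leq g$.
   Context: A numerical semigroup is a subset $\Lambda\subseteq\mathbb{N}_0$ closed under addition, containing $0$, with finite complement in $\mathbb{N}_0$. Its genus is $|\mathbb{N}_0\setminus\Lambda|$, its multiplicity $m$ is its smallest nonzero element and its Frobenius number $f$ is the largest element of $\mathbb{N}_0\setminus\Lambda$. For integers $a\le b$, $[a,b]=\{a,\dots,b\}$. For $A\subseteq\mathbb{Z}$ and $b\in\mathbb{Z}$, $A+A=\{a_1+a_2:a_1,a_2\in A\}$ and $b+A=\{a+b:a\in A\}$. For a positive integer $k$, $\mathcal A_k = \{A \subseteq [0, k-1] : 0 \in A \text{ and } k \notin A + A\}$. A numerical semigroup $\Lambda$ with multiplicity $m$ and Frobenius number $f$ satisfying $2m<f<3m$ has type $(A;k)$, where $k<m$ is a positive integer and $A\in\mathcal A_k$, if $f=2m+k$ and $\Lambda\cap[m,m+k]=A+m$. $F_n$ are the Fibonacci numbers, $F_1=F_2=1$, $F_{n+2}=F_{n+1}+F_n$, with the convention $F_n=0$ for all $n\le 0$. *)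

From mathcomp Require Import all_boot all_algebra.
Set Implicit Arguments. Unset Strict Implicit. Unset Printing Implicit Defensive.

(* A numerical semigroup Lambda is represented by its set of gaps
   N_0 \ Lambda, encoded canonically as a strictly increasing list. *)
Definition is_gapset (G : seq nat) : Prop :=
  sorted ltn G /\ 0 \notin G /\
  (forall a b, a \notin G -> b \notin G -> a + b \notin G).

Definition semigroup_of (G : seq nat) : pred nat := fun x => x \notin G.

Definition genus (G : seq nat) : nat := size G.

Definition is_multiplicity (G : seq nat) (m : nat) : Prop :=
  0 < m /\ semigroup_of G m /\ (forall x, 0 < x < m -> ~~ semigroup_of G x).

Definition is_frobenius (G : seq nat) (f : nat) : Prop :=
  ~~ semigroup_of G f /\ (forall x, ~~ semigroup_of G x -> x <= f).

Definition in_sumset (A : seq nat) (x : nat) : bool :=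
  has (fun a => has (fun b => a + b == x) A) A.

Definition in_calA (k : nat) (A : seq nat) : Prop :=
  sorted ltn A /\ (forall a, a \in A -> a <= k - 1) /\ 0 \in A /\ ~~ in_sumset A k.

Definition sumset_card_upto (A : seq nat) (k : nat) : nat :=
  count (in_sumset A) (iota 0 k.+1).

Definition has_type (G : seq nat) (A : seq nat) (k : nat) : Prop :=
  exists m f, is_multiplicity G m /\ is_frobenius G f /\
    2 * m < f < 3 * m /\ 0 < k /\ k < m /\ in_calA k A /\ f = 2 * m + k /\
    (forall x, m <= x <= m + k -> semigroup_of G x = ((x - m) \in A)).

Fixpoint fib (n : nat) : nat :=
  match n with
  | 0 => 0
  | 1 => 1
  | (m.+1 as p).+1 => fib p + fib m
  end.

Definition fibz (n : int) : nat :=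
  match n with Posz m => fib m | Negz _ => 0 end.

Definition card_is (P : seq nat -> Prop) (n : nat) : Prop :=
  exists s : seq (seq nat), uniq s /\ (forall G, G \in s <-> P G) /\ size s = n.

(* A semigroup of type (A; k) with multiplicity m has Frobenius number 2m + k,
   its elements up to m + k are forced by A, and so are 2m + (A + A) and the
   gap 2m + k.  Any choice W of the remaining m - 1 - s "free" positions in
   (m + k, 2m + k) gives a semigroup, because two nonzero elements with sum at
   most 2m + k both lie in m + A; here s = |(A + A) \cap [0, k]|.  Its genus is
   2m + k - |A| - s - |W|, so genus g is reached for C(m - 1 - s, 2m + k - |A|
   - s - g) choices.  Summed over m these are the terms C(j, 2j - T),
   T = g - s + |A| - k - 2, of a shallow diagonal of Pascal's triangle, starting
   at j = k - s; the whole diagonal sums to F_(T+1), and the terms with j < k - s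
   vanish when 3k < g + |A| + s. *)

From mathcomp Require Import all_boot all_algebra zify.
Set Implicit Arguments. Unset Strict Implicit. Unset Printing Implicit Defensive.

Definition diag_binom (T j : nat) : nat := if T <= j.*2 then 'C(j, j.*2 - T) else 0.

Lemma diag_binomSS T j : diag_binom T.+2 j.+1 = diag_binom T j + diag_binom T.+1 j.
Proof.
rewrite /diag_binom doubleS.
case: ifP => ?; case: ifP => ?; case: ifP => ?; try lia.
- have -> : j.*2.+2 - T.+2 = (j.*2 - T.+1).+1 by lia.
  by rewrite binS; congr ('C(_, _) + _); lia.
- have eq2jT : j.*2 = T by lia.
  by rewrite eq2jT !subnn !bin0.
Qed.

Lemma diag_binom_small T j : T < j -> diag_binom T j = 0.
Proof. by move=> ltTj; rewrite /diag_binom; case: ifP => // _; apply: bin_small; lia. Qed.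

Lemma sum_diag_binom T J : T < J -> \sum_(0 <= j < J) diag_binom T j = fib T.+1.
Proof.
elim/ltn_ind: T J => -[|[|T]] IH [|J] // ltTJ.
- rewrite big_nat_recl // big1_seq ?addn0 // => j /andP[_].
  by rewrite mem_index_iota => /andP[lt0j _]; apply: diag_binom_small.
- case: J ltTJ => // J _; rewrite !big_nat_recl // big1_seq ?addn0 // => j /andP[_].
  by rewrite mem_index_iota => /andP[lt0j _]; apply: diag_binom_small.
- rewrite big_nat_recl // (_ : diag_binom T.+2 0 = 0) // add0n.
  under eq_bigr do rewrite diag_binomSS.
  by rewrite big_split !IH //; [exact: addnC | lia].
Qed.

Lemma sum_diag_binom_low T lo : lo.*2 <= T.+1 -> \sum_(0 <= j < lo) diag_binom T j = 0.
Proof.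
move=> le_lo_T; apply: big1_seq => j; rewrite mem_index_iota => /andP[_ lt_j_lo].
by rewrite /diag_binom ifN //; lia.
Qed.

Fixpoint subseqs_size (r : nat) (u : seq nat) : seq (seq nat) :=
  match r, u with
  | 0, _ => [:: [::]]
  | _.+1, [::] => [::]
  | r'.+1, x :: u' => map (cons x) (subseqs_size r' u') ++ subseqs_size r u'
  end.

Lemma size_subseqs_size r u : size (subseqs_size r u) = 'C(size u, r).
Proof.
elim: u r => [|x u IH] [|r] //=.
by rewrite size_cat size_map !IH binS addnC.
Qed.

Lemma mem_subseqs_size r (u w : seq nat) : uniq u ->
  (w \in subseqs_size r u) = subseq w u && (size w == r).
Proof.
elim: u r w => [|x u IH] [|r] [|y w] //=; rewrite ?andbF // => /andP[xNu uu].
  by rewrite mem_cat IH // sub0seq; case: mapP => [[z _ /eqP] | _].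
have mem_map_cons :
    (y :: w \in map (cons x) (subseqs_size r u)) = (y == x) && (w \in subseqs_size r u).
  by apply/mapP/andP => [[z zr [-> ->]] | [/eqP-> wr]]; [rewrite eqxx | exists w].
rewrite mem_cat mem_map_cons !IH // eqSS; case: eqP => [-> | _] //=.
suff -> : subseq (x :: w) u = false by rewrite orbF.
by apply/negbTE; apply: contra xNu => /mem_subseq/(_ x (mem_head _ _)).
Qed.

Lemma subseqs_size_uniq r u : uniq u -> uniq (subseqs_size r u).
Proof.
elim: u r => [|x u IH] [|r] //= /andP[xNu uu].
rewrite cat_uniq map_inj_uniq ?IH //=; last by move=> ? ? [].
rewrite andbT; apply/hasP => -[w]; rewrite mem_subseqs_size // => /andP[/mem_subseq wu _].
by case/mapP=> z _ wE; rewrite wE in wu; have := wu x (mem_head _ _); rewrite (negbTE xNu).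
Qed.

(* The number of gap sets of genus g, type (A; k) and multiplicity m, where
   a = |A| and s = |(A + A) \cap [0, k]|: a binomial coefficient counting the
   free slots that are gaps. *)
Definition type_count (a s g k m : nat) : nat :=
  if a + s + g <= 2 * m + k then 'C(m - 1 - s, 2 * m + k - (a + s + g)) else 0.

Lemma type_count_diag a s g k m : s <= k -> k < m -> s + k + 2 <= a + g ->
  type_count a s g k m = diag_binom (a + g - (s + k + 2)) (m - 1 - s).
Proof.
move=> le_sk lt_km le_T; rewrite /type_count /diag_binom.
have -> : (a + g - (s + k + 2) <= (m - 1 - s).*2) = (a + s + g <= 2 * m + k) by lia.
by case: ifP => // _; congr 'C(_, _); lia.
Qed.

Lemma type_count_eq0 a s g k m : s <= k -> k < m -> a + g < s + k + 2 ->
  type_count a s g k m = 0.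
Proof. by move=> *; rewrite /type_count; case: ifP => // _; apply: bin_small; lia. Qed.

Lemma sum_type_count (a s g k : nat) : 0 < a -> 0 < s <= k ->
  let idx : int := (g%:Z - s%:Z + a%:Z - k%:Z - 1)%R in
  let n := \sum_(m <- iota k.+1 (g + a)) type_count a s g k m in
  n <= fibz idx /\ (3 * k + 2 <= g + a + s -> n = fibz idx).
Proof.
move=> a_gt0 /andP[s_gt0 le_sk] idx n.
have [le_T | lt_T] := leqP (s + k + 2) (a + g); last first.
  have -> : n = 0.
    by apply: big1_seq => m /andP[_]; rewrite mem_iota => /andP[? _]; apply: type_count_eq0.
  by split=> //; lia.
set T := a + g - (s + k + 2).
have -> : fibz idx = fib T.+1.
  by rewrite /idx (_ : (g%:Z - s%:Z + a%:Z - k%:Z - 1)%R = Posz T.+1) // /T; lia.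
have n_window : n = \sum_(k - s <= j < k - s + (g + a)) diag_binom T j.
  rewrite /n (_ : iota k.+1 _ = map (addn s.+1) (iota (k - s) (g + a))); last first.
    by rewrite -iotaDl; congr iota; lia.
  rewrite big_map /index_iota addKn; apply: eq_big_seq => j; rewrite mem_iota => j_range.
  by rewrite type_count_diag; [congr diag_binom | ..]; lia.
have whole : \sum_(0 <= j < k - s) diag_binom T j + n = fib T.+1.
  by rewrite n_window -big_cat_nat ?sum_diag_binom //; lia.
split; first by rewrite -whole leq_addl.
by move=> le_3k; rewrite -whole sum_diag_binom_low //; lia.
Qed.

Lemma count_mem_subset (T : eqType) (s t : seq T) :
  uniq s -> uniq t -> {subset s <= t} -> count (mem s) t = size s.
Proof.
move=> us ut sub_st; rewrite -size_filter; apply/perm_size/uniq_perm => //.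
  exact: filter_uniq.
by move=> x; rewrite mem_filter andb_idr //; apply: sub_st.
Qed.

Lemma mem_map_addn c s x : (x \in map (addn c) s) = (c <= x) && (x - c \in s).
Proof.
apply/mapP/andP => [[y ys ->] | [le_cx xs]]; first by rewrite leq_addr addKn.
by exists (x - c); rewrite ?subnKC.
Qed.

Lemma in_sumsetP A x :
  reflect (exists a1 a2, [/\ a1 \in A, a2 \in A & x = a1 + a2]) (in_sumset A x).
Proof.
apply: (iffP hasP) => [[a1 a1A /hasP[a2 a2A /eqP <-]] | [a1 [a2 [a1A a2A ->]]]].
  by exists a1, a2.
by exists a1 => //; apply/hasP; exists a2.
Qed.

Lemma multiplicity_uniq G m m' : is_multiplicity G m -> is_multiplicity G m' -> m = m'.
Proof.
move=> [m_gt0 [mG m_min]] [m'_gt0 [m'G m'_min]].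
case: (ltngtP m m') => // [lt_mm' | lt_m'm].
  by have := m'_min m; rewrite m_gt0 lt_mm' mG => /(_ isT).
by have := m_min m'; rewrite m'_gt0 lt_m'm m'G => /(_ isT).
Qed.

Section TypeGapsets.
Variables (A : seq nat) (k : nat).
Hypothesis HA : in_calA k A.

Lemma calA0 : 0 \in A.
Proof. by case: HA => _ [_ []]. Qed.

Lemma calA_notin_sumset : ~~ in_sumset A k.
Proof. by case: HA => _ [_ []]. Qed.

Lemma calA_gt0 : 0 < k.
Proof.
rewrite lt0n; apply: contraNneq calA_notin_sumset => ->.
by apply/in_sumsetP; exists 0, 0; rewrite calA0.
Qed.

Lemma calA_lt a : a \in A -> a < k.
Proof. by case: HA => _ [le_Ak _] /le_Ak; have := calA_gt0; lia. Qed.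

Lemma calA_uniq : uniq A.
Proof. by case: HA => sA _; apply: sorted_uniq sA; [apply: ltn_trans | apply: ltnn]. Qed.

Definition sums_below : seq nat := [seq x <- iota 0 k | in_sumset A x].

Lemma size_sums_below : size sums_below = sumset_card_upto A k.
Proof.
rewrite size_filter /sumset_card_upto -addn1 iotaD count_cat /=.
by rewrite (negbTE calA_notin_sumset) !addn0.
Qed.

Section Multiplicity.
Variable m : nat.
Hypothesis lt_km : k < m.

(* The positions in (m + k, 2m + k) whose membership in a semigroup of
   type (A; k) and multiplicity m is not forced. *)
Definition free_slots : seq nat :=
  iota (m + k).+1 (m - k.+1) ++ map (addn (2 * m)) [seq y <- iota 0 k | ~~ in_sumset A y].

Lemma mem_free_slots x : (x \in free_slots) =
  (m + k < x < 2 * m) || (2 * m <= x < 2 * m + k) && ~~ in_sumset A (x - 2 * m).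
Proof.
rewrite mem_cat mem_iota mem_map_addn mem_filter mem_iota add0n.
congr orb; first by apply/idP/idP; lia.
by case le_2mx: (2 * m <= x) => //=; rewrite andbC; congr andb; lia.
Qed.

Lemma free_slots_uniq : uniq free_slots.
Proof.
rewrite cat_uniq iota_uniq map_inj_uniq ?filter_uniq ?iota_uniq ?andbT //=; last exact: addnI.
by apply/hasP => -[x]; rewrite mem_map_addn mem_iota => /andP[le_2mx _]; lia.
Qed.

Lemma size_free_slots : size free_slots = m - 1 - sumset_card_upto A k.
Proof.
rewrite size_cat size_iota size_map size_filter -size_sums_below size_filter.
have := count_predC (in_sumset A) (iota 0 k); rewrite size_iota.
rewrite (_ : count (fun y => ~~ _) _ = count (predC (in_sumset A)) (iota 0 k)) //.
by set c := count (in_sumset A) _; set d := count (predC _) _; lia.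
Qed.

(* Membership of 0 < x <= 2m + k in the semigroup of type (A; k) and
   multiplicity m whose elements among the free slots are listed by W. *)
Definition nongapb (W : seq nat) (x : nat) : bool :=
  [|| (m <= x <= m + k) && (x - m \in A),
      (2 * m <= x < 2 * m + k) && in_sumset A (x - 2 * m) | x \in W].

Definition gaps_of (W : seq nat) : seq nat :=
  [seq x <- iota 1 (2 * m + k) | ~~ nongapb W x].

Lemma mem_gaps_of W x : (x \in gaps_of W) = (0 < x <= 2 * m + k) && ~~ nongapb W x.
Proof. by rewrite mem_filter mem_iota andbC; congr andb; lia. Qed.

Lemma notin_gaps_of W x :
  (x \notin gaps_of W) = [|| x == 0, 2 * m + k < x | nongapb W x].
Proof. by rewrite mem_gaps_of !negb_and negbK -leqNgt leqn0 -ltnNge -orbA. Qed.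

Lemma gaps_of_sorted W : sorted ltn (gaps_of W).
Proof. by apply: sorted_filter; [apply: ltn_trans | apply: iota_ltn_sorted]. Qed.

Definition nongaps (W : seq nat) : seq nat :=
  map (addn m) A ++ map (addn (2 * m)) sums_below ++ W.

Lemma mem_nongaps W x : (x \in nongaps W) = nongapb W x.
Proof.
rewrite !mem_cat !mem_map_addn mem_filter mem_iota add0n.
congr [|| _, _ | _]; last by case le_2mx: (2 * m <= x) => //=; rewrite andbC; congr andb; lia.
apply/andP/andP => [[le_mx xA] | [/andP[le_mx _] //]].
by have := calA_lt xA; split => //; lia.
Qed.

Section FreeSubset.
Variable W : seq nat.
Hypothesis sub_W : {subset W <= free_slots}.

Lemma nongapb_range x : nongapb W x -> m <= x < 2 * m + k.
Proof.
case/or3P=> [/andP[x_mk /calA_lt] | /andP[] | /sub_W]; rewrite ?mem_free_slots; lia.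
Qed.

Lemma nongapb_low x : x <= m + k -> nongapb W x = (m <= x) && (x - m \in A).
Proof.
move=> le_x_mk; rewrite /nongapb le_x_mk andbT.
have -> : (2 * m <= x < 2 * m + k) = false by lia.
by case: (boolP (x \in W)) => [/sub_W | _]; rewrite ?mem_free_slots ?orbF //; lia.
Qed.

Lemma nongapb_free x : x \in free_slots -> nongapb W x = (x \in W).
Proof.
rewrite mem_free_slots /nongapb => x_free.
have -> : (m <= x <= m + k) = false by lia.
by case/orP: x_free => [? | /andP[-> /negbTE ->]]; rewrite ?andbF //=; lia.
Qed.

Lemma mem_gaps_of_free x : x \in free_slots -> (x \in gaps_of W) = (x \notin W).
Proof.
move=> x_free; rewrite mem_gaps_of nongapb_free //.
by move: x_free; rewrite mem_free_slots => ?; rewrite (_ : 0 < x <= _) //; lia.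
Qed.

Lemma gaps_of_multiplicity : is_multiplicity (gaps_of W) m.
Proof.
split; first lia.
split.
  by rewrite /semigroup_of mem_gaps_of nongapb_low ?leq_addr // leqnn subnn calA0 andbF.
move=> x /andP[x_gt0 lt_xm]; rewrite /semigroup_of negbK mem_gaps_of x_gt0 /=.
by apply/andP; split; [lia | apply: contraTN lt_xm => /nongapb_range; lia].
Qed.

Lemma gaps_of_gapset : is_gapset (gaps_of W).
Proof.
split; [exact: gaps_of_sorted | split; first by rewrite mem_gaps_of].
move=> a b; rewrite !notin_gaps_of.
have [-> | a_gt0] := posnP a; first by rewrite add0n => _ ?.
have [-> | b_gt0] := posnP b; first by rewrite addn0 (gtn_eqF a_gt0) => ? _.
rewrite !gtn_eqF ?addn_gt0 ?a_gt0 ?b_gt0 //=.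
have [// | le_ab_f] := ltnP (2 * m + k) (a + b); rewrite /=.
move=> /orP[? | a_ng]; first lia.
move=> /orP[? | b_ng]; first lia.
have := nongapb_range a_ng; have := nongapb_range b_ng => b_range a_range.
move: a_ng b_ng; rewrite [nongapb W a]nongapb_low ?[nongapb W b]nongapb_low; try lia.
(* The sum lies in 2m + (A + A), hence below 2m + k as k is not in A + A. *)
move=> /andP[_ aA] /andP[_ bA]; have ab_sum : in_sumset A (a + b - 2 * m).
  by apply/in_sumsetP; exists (a - m), (b - m); split=> //; lia.
have ab_ne_k : a + b - 2 * m != k.
  by apply: contraNneq calA_notin_sumset => <-.
by rewrite /nongapb ab_sum andbT; apply/or3P; apply: Or32; lia.
Qed.

Lemma gaps_of_type : has_type (gaps_of W) A k.
Proof.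
have f_gap : 2 * m + k \in gaps_of W.
  rewrite mem_gaps_of; apply/andP; split; first lia.
  by apply: contraTN isT => /nongapb_range; lia.
exists m, (2 * m + k); split; first exact: gaps_of_multiplicity.
split.
  split; first by rewrite /semigroup_of negbK.
  by move=> x; rewrite /semigroup_of negbK mem_gaps_of => /andP[/andP[]].
split; first by have := calA_gt0; lia.
split; first exact: calA_gt0.
do 3 split=> //.
move=> x /andP[le_mx le_x_mk].
have [x_neq0 x_le_f] : x != 0 /\ x <= 2 * m + k by split; lia.
by rewrite /semigroup_of notin_gaps_of nongapb_low // le_mx (negbTE x_neq0) ltnNge x_le_f.
Qed.

Lemma genus_gaps_of : uniq W ->
  genus (gaps_of W) + (size A + sumset_card_upto A k + size W) = 2 * m + k.
Proof.
move=> uW; have uL : uniq (nongaps W).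
  rewrite !cat_uniq uW !map_inj_uniq ?calA_uniq ?filter_uniq ?iota_uniq //=; try exact: addnI.
  rewrite andbT; apply/andP; split.
    apply/hasP => -[x]; rewrite mem_cat !mem_map_addn => x_rest /andP[_ /calA_lt].
    by case/orP: x_rest => [/andP[le_2mx _] | /sub_W]; rewrite ?mem_free_slots; lia.
  apply/hasP => -[x /sub_W]; rewrite mem_free_slots mem_map_addn mem_filter.
  by case: (in_sumset A (x - 2 * m)); lia.
have sub_L : {subset nongaps W <= iota 1 (2 * m + k)}.
  by move=> x; rewrite mem_nongaps mem_iota => /nongapb_range; lia.
have count_nongapb : count (nongapb W) (iota 1 (2 * m + k)) = size (nongaps W).
  rewrite -(count_mem_subset uL (iota_uniq _ _) sub_L).
  by apply: eq_count => x; rewrite -mem_nongaps.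
have := count_predC (nongapb W) (iota 1 (2 * m + k)).
rewrite count_nongapb size_iota /genus size_filter /nongaps !size_cat !size_map size_sums_below.
by rewrite (_ : count _ _ = count (predC (nongapb W)) (iota 1 (2 * m + k))) //; lia.
Qed.

End FreeSubset.

Lemma gaps_of_free_subseq W : subseq W free_slots ->
  W = [seq x <- free_slots | x \notin gaps_of W].
Proof.
move=> W_free; rewrite {1}(subseq_uniqP free_slots_uniq W_free).
apply: eq_in_filter => x x_free.
by rewrite mem_gaps_of_free ?negbK.
Qed.

Lemma type_gapset_eq G : is_gapset G -> is_multiplicity G m -> is_frobenius G (2 * m + k) ->
  (forall x, m <= x <= m + k -> semigroup_of G x = (x - m \in A)) ->
  G = gaps_of [seq x <- free_slots | x \notin G].
Proof.
rewrite /semigroup_of => -[sG [G0 G_add]] [_ [mNG m_min]] [fG f_max] G_type.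
set W := filter _ _; have sub_W : {subset W <= free_slots}.
  by move=> x; rewrite mem_filter => /andP[].
apply: (irr_sorted_eq ltn_trans ltnn sG (gaps_of_sorted W)) => x.
rewrite mem_gaps_of; have [-> | x_gt0] := posnP x; first exact/negbTE.
have [f_lt_x | x_le_f] := ltnP (2 * m + k) x.
  rewrite /=; apply/negbTE; apply: contraTN f_lt_x => xG.
  by rewrite -leqNgt; apply: f_max; rewrite negbK.
rewrite /=.
have [x_lt_m | m_le_x] := ltnP x m.
  have -> : nongapb W x = false by apply: contraTF x_lt_m => /(nongapb_range sub_W); lia.
  by have := m_min x; rewrite x_gt0 x_lt_m negbK => ->.
have [x_le_mk | mk_lt_x] := leqP x (m + k).
  by rewrite nongapb_low // m_le_x -G_type ?m_le_x // negbK.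
have [x_free | x_fixed] := boolP (x \in free_slots).
  by rewrite nongapb_free // mem_filter x_free andbT negbK.
have [-> | /andP[x_mid x_sum]] :
    x = 2 * m + k \/ (2 * m <= x < 2 * m + k) && in_sumset A (x - 2 * m).
  by move: x_fixed; rewrite mem_free_slots; case: in_sumset; rewrite ?andbT ?andbF /=; lia.
  rewrite (negbNE fG); apply/esym/negP => /(nongapb_range sub_W).
  by rewrite ltnn andbF.
rewrite /nongapb x_mid x_sum /= orbT; apply/negbTE.
case/in_sumsetP: x_sum => a1 [a2 [a1A a2A x_sum]].
have a_ng a : a \in A -> m + a \notin G.
  by move=> aA; rewrite G_type ?addKn //; have := calA_lt aA; lia.
by rewrite (_ : x = m + a1 + (m + a2)); [apply: G_add; apply: a_ng | lia].
Qed.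

End Multiplicity.

Lemma sumset_card_upto_gt0 : 0 < sumset_card_upto A k.
Proof.
rewrite -size_sums_below -has_predT; apply/hasP; exists 0 => //.
rewrite mem_filter; apply/andP; split; last by rewrite mem_iota add0n calA_gt0.
apply/in_sumsetP.
by exists 0, 0; rewrite calA0.
Qed.

Lemma sumset_card_upto_le : sumset_card_upto A k <= k.
Proof. by rewrite -size_sums_below size_filter -[leqRHS](size_iota 0 k) count_size. Qed.

Definition type_candidates (g m : nat) : seq (seq nat) :=
  if size A + sumset_card_upto A k + g <= 2 * m + k then
    subseqs_size (2 * m + k - (size A + sumset_card_upto A k + g)) (free_slots m)
  else [::].

Definition type_gapsets (g : nat) : seq (seq nat) :=
  [seq gaps_of m W | m <- iota k.+1 (g + size A), W <- type_candidates g m].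

Lemma mem_type_candidates g m (W : seq nat) : k < m -> (W \in type_candidates g m) =
  subseq W (free_slots m) && (size A + sumset_card_upto A k + g + size W == 2 * m + k).
Proof.
move=> lt_km; rewrite /type_candidates; case: ifP => le_c.
  by rewrite mem_subseqs_size ?free_slots_uniq //; congr andb; apply/eqP/eqP; lia.
by rewrite in_nil; apply/esym/negP => /andP[_ /eqP]; lia.
Qed.

Lemma size_type_gapsets g : size (type_gapsets g) =
  \sum_(m <- iota k.+1 (g + size A)) type_count (size A) (sumset_card_upto A k) g k m.
Proof.
rewrite size_allpairs_dep sumnE big_map; apply: eq_big_seq => m.
rewrite mem_iota => /andP[lt_km _]; rewrite /type_candidates /type_count.
by case: ifP => // _; rewrite size_subseqs_size size_free_slots.
Qed.

Lemma type_gapsets_uniq g : uniq (type_gapsets g).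
Proof.
apply: allpairs_uniq_dep; first exact: iota_uniq.
  move=> m; rewrite mem_iota => /andP[lt_km _]; rewrite /type_candidates; case: ifP => // _.
  by apply: subseqs_size_uniq; apply: free_slots_uniq.
move=> p q /allpairsPdep[m [W [m_in W_in ->]]] /allpairsPdep[m' [W' [m'_in W'_in ->]]] /=.
move: m_in m'_in W_in W'_in; rewrite !mem_iota => /andP[lt_km _] /andP[lt_km' _].
rewrite !mem_type_candidates // => /andP[W_free _] /andP[W'_free _] eqG.
have eq_mm' : m = m'.
  apply: (multiplicity_uniq (gaps_of_multiplicity lt_km (mem_subseq W_free))).
  by rewrite eqG; apply: gaps_of_multiplicity (mem_subseq W'_free).
move: W'_free eqG; rewrite -{}eq_mm' => W'_free eqG.
by rewrite (gaps_of_free_subseq lt_km W_free) (gaps_of_free_subseq lt_km W'_free) eqG.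
Qed.

Lemma mem_type_gapsets g G :
  G \in type_gapsets g <-> is_gapset G /\ genus G = g /\ has_type G A k.
Proof.
split.
  case/allpairsPdep => m [W [m_in W_in ->]]; move: m_in; rewrite mem_iota => /andP[lt_km _].
  move: W_in; rewrite mem_type_candidates // => /andP[W_free /eqP genus_eq].
  have sub_W := mem_subseq W_free.
  split; first exact: gaps_of_gapset sub_W.
  split; last exact: gaps_of_type sub_W.
  by have := genus_gaps_of lt_km sub_W (subseq_uniq W_free (free_slots_uniq lt_km)); lia.
move=> [G_gap [G_genus [m [f [G_mult [G_frob [_ [_ [lt_km [_ [f_eq G_type]]]]]]]]]]].
rewrite f_eq in G_frob; have G_eq := type_gapset_eq lt_km G_gap G_mult G_frob G_type.
set W := filter _ _ in G_eq; have W_free : subseq W (free_slots m) := filter_subseq _ _.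
have := genus_gaps_of lt_km (mem_subseq W_free) (subseq_uniq W_free (free_slots_uniq lt_km)).
rewrite -G_eq G_genus => genus_eq.
have size_W : @size nat W <= m - 1 - sumset_card_upto A k.
  by rewrite -size_free_slots //; apply: size_subseq.
apply/allpairsPdep; exists m, W; split=> //.
  by rewrite mem_iota; have := sumset_card_upto_le; lia.
by rewrite mem_type_candidates // W_free /=; apply/eqP; lia.
Qed.

End TypeGapsets.

Unset Implicit Arguments.
Theorem proposition3p5 (g k : nat) (A : seq nat) :
  0 < g -> 0 < k -> in_calA k A ->
  let idx : int := (g%:Z - (sumset_card_upto A k)%:Z + (size A)%:Z - k%:Z - 1)%R in
  exists n : nat,
    card_is (fun G => is_gapset G /\ genus G = g /\ has_type G A k) n /\
    n <= fibz idx /\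
    (3 * k + 2 <= g + size A + sumset_card_upto A k -> n = fibz idx) /\
    (3 * k <= g -> n = fibz idx).
Proof.
move=> _ _ HA idx; exists (size (type_gapsets A k g)); split.
  exists (type_gapsets A k g); split; first exact: type_gapsets_uniq.
  by split=> // G; apply: mem_type_gapsets.
have size_A_gt0 : 0 < size A by case: (A) (calA0 HA).
have s_range : 0 < sumset_card_upto A k <= k.
  by rewrite (sumset_card_upto_gt0 HA) (sumset_card_upto_le HA).
have [le_fib eq_fib] := sum_type_count g size_A_gt0 s_range.
rewrite size_type_gapsets //; split=> //; split=> // le_3k.
by apply: eq_fib; move: (sumset_card_upto_gt0 HA); lia.
Qed.
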